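(* Let $\eta>0$, $\beta\in[0,1)$ and $\lambda_i$ with $\eta\lambda_i>0$. Define ${\mathcal{M}}_i:\mathbb{S}^2\to\mathbb{S}^2$ by ${\mathcal{M}}_i({\bm{X}}):={\bm{A}}_i{\bm{X}}{\bm{A}}_i^\top+\eta^2\lambda_i^2({\bm{X}})_{11}{\bm{Q}}$, where ${\bm{A}}_i=\begin{bmatrix}1-\eta\lambda_i&-\beta\\ \eta\lambda_i&\beta\end{bmatrix}$ and ${\bm{Q}}=\begin{bmatrix}1&-1\\-1&1\end{bmatrix}$. Then: (a) $\rho({\mathcal{M}}_i)<1$ if and only if $\eta\lambda_i<1-\beta^2$; (b) if $\eta\lambda_i<1-\beta^2$, then $\mathrm{Id}-{\mathcal{M}}_i$ is invertible and $(\mathrm{Id}-{\mathcal{M}}_i)^{-1}(\mathbb{S}^2_+)\subseteq\mathbb{S}^2_+$; (c) if $\eta\lambda_i<1-\beta^2$, then ${\bm{Y}}_i:=(\mathrm{Id}-{\mathcal{M}}_i)^{-1}{\bm{Q}}\in\mathbb{S}^2_+$ and $\gamma_i:=({\bm{Y}}_i)_{11}=\dfrac{1+\beta}{2\eta\lambda_i(1-\beta^2-\eta\lambda_i)}$.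
   Context: $\mathbb{S}^2$ denotes the space of real symmetric $2\times2$ matrices and $\mathbb{S}^2_+$ the cone of positive semidefinite ones; $\rho(\cdot)$ denotes spectral radius and $\mathrm{Id}$ the identity map. *)

From HB Require Import structures.
From mathcomp Require Import all_boot all_order all_algebra.
From mathcomp Require Import classical_sets reals.
From mathcomp Require Import complex.
Set Implicit Arguments. Unset Strict Implicit. Unset Printing Implicit Defensive.
Import Order.TTheory GRing.Theory Num.Theory.
Local Open Scope ring_scope.
Local Open Scope classical_set_scope.

Section Defs.
Variable R : realType.

Definition spectral_radius n (A : 'M[R]_n) : R :=
  sup [set Normc.normc z | z in [set z : R[i] |
         root (char_poly (map_mx (fun x : R => x%:C%C) A)) z]].

Definition mx2 (a b c d : R) : 'M[R]_2 :=
  \matrix_(i < 2, j < 2)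
    if (i : nat) == 0%N then (if (j : nat) == 0%N then a else b)
    else (if (j : nat) == 0%N then c else d).

Definition sym2 (X : 'M[R]_2) : Prop := X^T = X.
Definition psd2 (X : 'M[R]_2) : Prop :=
  X^T = X /\ forall v : 'cV[R]_2, 0 <= (v^T *m X *m v) 0 0.

Definition Amx (eta beta lambda : R) : 'M[R]_2 :=
  mx2 (1 - eta * lambda) (- beta) (eta * lambda) beta.
Definition Qmx : 'M[R]_2 := mx2 1 (-1) (-1) 1.

Definition Mop (eta beta lambda : R) (X : 'M[R]_2) : 'M[R]_2 :=
  Amx eta beta lambda *m X *m (Amx eta beta lambda)^T
  + (eta ^+ 2 * lambda ^+ 2 * X 0 0) *: Qmx.

Definition sym_basis (j : 'I_3) : 'M[R]_2 :=
  if (j : nat) == 0%N then delta_mx 0 0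
  else if (j : nat) == 1%N then delta_mx 0 1 + delta_mx 1 0
  else delta_mx 1 1.
Definition sym_coord (i : 'I_3) (X : 'M[R]_2) : R :=
  if (i : nat) == 0%N then X 0 0
  else if (i : nat) == 1%N then X 0 1
  else X 1 1.

(* Matrix (in the above basis) of a map f : S^2 -> S^2, i.e. of the
   restriction to S^2 of a map on 2x2 matrices preserving symmetry. *)
Definition sym_opmx (f : 'M[R]_2 -> 'M[R]_2) : 'M[R]_3 :=
  \matrix_(i < 3, j < 3) sym_coord i (f (sym_basis j)).

Definition op_spectral_radius (f : 'M[R]_2 -> 'M[R]_2) : R :=
  spectral_radius (sym_opmx f).

End Defs.

(* M maps the positive semidefinite cone into itself, and
   Z := delta (Id - M)^{-1}(I), with delta = 2 eta lambda (1 - beta^2 - eta lambda),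
   is positive definite and satisfies M Z <= theta Z for some theta < 1 as soon
   as eta lambda < 1 - beta^2.  If X - M X >= 0 and X + c Z >= 0, then
   X + c theta Z = (X - M X) + M (X + c Z) + c (theta Z - M Z) >= 0; starting
   from c large and iterating gives X + c theta^k Z >= 0 for all k, hence X >= 0.
   On S^2 = span(E11, E12 + E21, E22) the map M has the characteristic
   polynomial p(t) = (t - beta)(t - 1)(t - beta^2)
   + 2 eta lambda t (t (1 + beta - eta lambda) - beta (1 + beta)), with
   p(1) = delta.  If delta <= 0, the monic p has a real root >= 1.  Otherwise
   p > 0 on [1, +oo) and p < 0 on (-oo, -1]; a nonreal root z forces the real
   root r to satisfy r |z|^2 = beta^3, which for |z| >= 1 puts r in
   [0, beta^2], where p < 0.  Finally Id - M is inverted by an explicit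
   formula, which gives gamma. *)

From mathcomp Require Import all_boot all_order all_algebra.
From mathcomp Require Import classical_sets boolp reals complex polyrcf.
From mathcomp Require Import topology normedtype sequences.
From mathcomp Require Import ring lra.
Set Implicit Arguments. Unset Strict Implicit. Unset Printing Implicit Defensive.
Import Order.TTheory GRing.Theory Num.Theory numFieldNormedType.Exports.
Local Open Scope ring_scope.

Lemma ge0_of_addr_expr (R : archiRealFieldType) (q z t : R) :
  `|t| < 1 -> (forall k, 0 <= q + t ^+ k * z) -> 0 <= q.
Proof.
move=> t_lt1 ge0; rewrite leNgt; apply/negP => q_lt0.
have tk_cvg : ((fun k => q + t ^+ k * z) @ \oo --> q)%classic.
  rewrite -[X in (_ --> X)%classic]addr0 -(mul0r z).
  exact: cvgD (cvg_cst q) (cvgMl (cvg_expr t_lt1)).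
have [N _ lt0] := cvgr_lt _ tk_cvg _ q_lt0.
by have := lt0 N (leqnn N); rewrite /= ltNge ge0.
Qed.

Section QuadraticForm.
Variables (R : realFieldType) (n : nat).
Implicit Types (X Y : 'M[R]_n) (v : 'cV[R]_n).

Definition qform X v : R := (v^T *m X *m v) 0 0.
Definition psd X : Prop := forall v, 0 <= qform X v.

Lemma qformD X Y v : qform (X + Y) v = qform X v + qform Y v.
Proof. by rewrite /qform mulmxDr mulmxDl mxE. Qed.

Lemma qformZ k X v : qform (k *: X) v = k * qform X v.
Proof. by rewrite /qform -scalemxAr -scalemxAl mxE. Qed.

Lemma qformN X v : qform (- X) v = - qform X v.
Proof. by rewrite -scaleN1r qformZ mulN1r. Qed.

Lemma qformB X Y v : qform (X - Y) v = qform X v - qform Y v.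
Proof. by rewrite qformD qformN. Qed.

Lemma qform_scalar k v : qform k%:M v = k * \sum_i v i 0 ^+ 2.
Proof.
rewrite -scalemx1 qformZ /qform mulmx1 mxE; congr (_ * _).
by apply: eq_bigr => i _; rewrite mxE expr2.
Qed.

Lemma qform_sum X v : qform X v = \sum_i \sum_j v i 0 * X i j * v j 0.
Proof.
rewrite /qform mxE exchange_big; apply: eq_bigr => j _.
by rewrite mxE big_distrl; apply: eq_bigr => i _; rewrite !mxE.
Qed.

Lemma psdD X Y : psd X -> psd Y -> psd (X + Y).
Proof. by move=> pX pY v; rewrite qformD addr_ge0. Qed.

Lemma psdZ k X : 0 <= k -> psd X -> psd (k *: X).
Proof. by move=> k0 pX v; rewrite qformZ mulr_ge0. Qed.

Lemma qform_ge_sum_norm X v :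
  - (\sum_i \sum_j `|X i j|) * \sum_i v i 0 ^+ 2 <= qform X v.
Proof.
set N := \sum_i v i 0 ^+ 2.
have sq_le i : v i 0 ^+ 2 <= N.
  by rewrite /N (bigD1 i) //= lerDl sumr_ge0 // => j _; rewrite sqr_ge0.
rewrite qform_sum mulNr mulr_suml -sumrN; apply: ler_sum => i _.
rewrite mulr_suml -sumrN; apply: ler_sum => j _.
have vij : `|v i 0| * `|v j 0| <= N.
  have := sq_le i; have := sq_le j.
  rewrite -(real_normK (num_real (v i 0))) -(real_normK (num_real (v j 0))).
  have := sqr_ge0 (`|v i 0| - `|v j 0|); rewrite sqrrB; lra.
by apply: lerNnormlW; rewrite !normrM mulrAC mulrC ler_wpM2l.
Qed.

Lemma psd_addZ_large X Z (e : R) : 0 < e -> psd (Z - e%:M) ->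
  exists2 c, 0 <= c & psd (X + c *: Z).
Proof.
move=> e_gt0 Z_ge; set C := \sum_i \sum_j `|X i j|.
have C_ge0 : 0 <= C by rewrite sumr_ge0 // => i _; rewrite sumr_ge0.
exists (C / e); first by rewrite divr_ge0 // ltW.
move=> v; have := Z_ge v; rewrite qformD qformZ qformB qform_scalar => Zv.
have := qform_ge_sum_norm X v; rewrite -/C.
have : 0 <= C / e * (qform Z v - e * \sum_i v i 0 ^+ 2) by rewrite mulr_ge0 // divr_ge0 // ltW.
rewrite mulrBr mulrA divfK ?gt_eqF //; lra.
Qed.

End QuadraticForm.

Lemma qform_mulmx (R : realFieldType) n m (A : 'M[R]_(n, m)) (X : 'M[R]_m) v :
  qform (A *m X *m A^T) v = qform X (A^T *m v).
Proof. by rewrite /qform trmx_mul trmxK !mulmxA. Qed.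

Lemma qform_delta (R : realFieldType) n (X : 'M[R]_n) i :
  qform X (delta_mx i 0) = X i i.
Proof. by rewrite /qform trmx_delta -rowE -colE !mxE. Qed.

Section PositiveMap.
Variables (R : archiRealFieldType) (n : nat) (M : 'M[R]_n -> 'M[R]_n).
Variables (Z : 'M[R]_n) (e t : R).
Hypothesis M_linear : linear M.
Hypothesis M_psd : forall X, psd X -> psd (M X).
Hypotheses (e_gt0 : 0 < e) (Z_ge : psd (Z - e%:M)).
Hypotheses (t_ge0 : 0 <= t) (t_lt1 : t < 1) (MZ_le : psd (t *: Z - M Z)).

Lemma psd_addZ_expr X c : 0 <= c -> psd (X - M X) -> psd (X + c *: Z) ->
  forall k, psd (X + (c * t ^+ k) *: Z).
Proof.
move=> c_ge0 pXM pXZ; elim=> [|k IHk]; first by rewrite expr0 mulr1.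
have ctk_ge0 : 0 <= c * t ^+ k by rewrite mulr_ge0 ?exprn_ge0.
have -> : X + (c * t ^+ k.+1) *: Z =
    (X - M X) + M (X + (c * t ^+ k) *: Z) + (c * t ^+ k) *: (t *: Z - M Z).
  rewrite [X + (c * t ^+ k) *: Z]addrC M_linear addrC scalerBr scalerA -mulrA -exprSr.
  by rewrite [X - M X + _]addrA subrK -addrA [_ *: M Z + _]addrC subrK.
by apply: psdD; [apply: psdD; last exact: M_psd | exact: psdZ].
Qed.

Lemma psd_of_psd_subr X : psd (X - M X) -> psd X.
Proof.
move=> pXM v; have [c c_ge0 pXZ] := psd_addZ_large X e_gt0 Z_ge.
apply: (@ge0_of_addr_expr _ _ (c * qform Z v) t); first by rewrite ger0_norm.
move=> k; have := psd_addZ_expr c_ge0 pXM pXZ k v.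
by rewrite qformD qformZ mulrAC mulrC.
Qed.

End PositiveMap.

Section TwoByTwo.
Variable R : realType.
Implicit Types (p q r s : R) (X : 'M[R]_2).

Lemma mx2_00 p q r s : mx2 p q r s 0 0 = p. Proof. by rewrite mxE. Qed.
Lemma mx2_01 p q r s : mx2 p q r s 0 1 = q. Proof. by rewrite mxE. Qed.
Lemma mx2_10 p q r s : mx2 p q r s 1 0 = r. Proof. by rewrite mxE. Qed.
Lemma mx2_11 p q r s : mx2 p q r s 1 1 = s. Proof. by rewrite mxE. Qed.
Definition mx2E := (mx2_00, mx2_01, mx2_10, mx2_11).

Lemma ord2P (P : 'I_2 -> Prop) : P 0 -> P 1 -> forall i, P i.
Proof.
move=> P0 P1 [[|[|//]] i_lt2].
  by rewrite (_ : Ordinal _ = 0) //; apply: val_inj.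
by rewrite (_ : Ordinal _ = 1) //; apply: val_inj.
Qed.

Lemma sym2_10 X : sym2 X -> X 1 0 = X 0 1.
Proof. by move/matrixP/(_ 0 1); rewrite mxE. Qed.

Lemma sym2_mx2 p q r : sym2 (mx2 p q q r).
Proof. by apply/matrixP; apply: ord2P; apply: ord2P; rewrite mxE !mx2E. Qed.

Lemma sum_ord2 (F : 'I_2 -> R) : \sum_i F i = F 0 + F 1.
Proof.
rewrite !big_ord_recl big_ord0 addr0.
by congr (F _ + F _); apply: val_inj.
Qed.

Lemma qform2 X v : qform X v =
  X 0 0 * v 0 0 ^+ 2 + (X 0 1 + X 1 0) * v 0 0 * v 1 0 + X 1 1 * v 1 0 ^+ 2.
Proof. by rewrite qform_sum !sum_ord2; ring. Qed.

Lemma psd_mx2_sub_scalar p q r : 0 < p + r ->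
  psd (mx2 p q q r - ((p * r - q ^+ 2) / (p + r))%:M).
Proof.
move=> tr_gt0 v; rewrite qformB qform_scalar qform2 sum_ord2 !mx2E.
rewrite -(pmulr_rge0 _ tr_gt0).
have -> : forall s t, (p + r) * (p * s ^+ 2 + (q + q) * s * t + r * t ^+ 2
    - (p * r - q ^+ 2) / (p + r) * (s ^+ 2 + t ^+ 2))
    = (p * s + q * t) ^+ 2 + (q * s + r * t) ^+ 2.
  by move=> s t; field; rewrite gt_eqF.
by rewrite addr_ge0 ?sqr_ge0.
Qed.

Lemma psd_scalar_sub_mx2 p q r : 0 < r -> q ^+ 2 <= p * r ->
  psd ((p + r)%:M - mx2 p q q r).
Proof.
move=> r_gt0 det_ge0 v; rewrite qformB qform_scalar qform2 sum_ord2 !mx2E.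
rewrite -(pmulr_rge0 _ r_gt0).
have -> : forall s t, r * ((p + r) * (s ^+ 2 + t ^+ 2)
    - (p * s ^+ 2 + (q + q) * s * t + r * t ^+ 2))
    = (r * s - q * t) ^+ 2 + (p * r - q ^+ 2) * t ^+ 2.
  by move=> s t; ring.
by rewrite addr_ge0 ?sqr_ge0 // mulr_ge0 ?sqr_ge0 // subr_ge0.
Qed.

End TwoByTwo.

Section SpectralRadius.
Variables (R : realType) (n : nat) (A : 'M[R]_n).
Local Notation chiC := (char_poly (map_mx (fun x : R => x%:C%C) A)).
Local Notation root_norms :=
  [set Normc.normc z | z in [set z : R[i] | root chiC z]]%classic.

Lemma char_poly_roots_seq :
  exists rs : seq R[i], forall z, root chiC z -> z \in rs.
Proof.
have [rs chiE] := closed_field_poly_normal chiC.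
exists rs => z; rewrite chiE rootZ ?root_prod_XsubC // lead_coef_eq0.
exact/monic_neq0/char_poly_monic.
Qed.

Lemma normc_le_spectral_radius z :
  root chiC z -> Normc.normc z <= spectral_radius A.
Proof.
move=> chi_z; have [rs rsP] := char_poly_roots_seq.
apply: ub_le_sup; last by exists z.
exists (\big[Num.max/0]_(w <- rs) Normc.normc w) => _ [w /rsP w_rs <-].
exact: le_bigmax_seq.
Qed.

Lemma spectral_radius_lt c : 0 < c ->
  (forall z, root chiC z -> Normc.normc z < c) -> spectral_radius A < c.
Proof.
move=> c_gt0 norm_lt; have [rs rsP] := char_poly_roots_seq.
have [some_root|/nonemptyPn no_root] := pselect (root_norms !=set0)%classic.
  set B := \big[Num.max/0]_(w <- rs | root chiC w) Normc.normc w.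
  apply: (le_lt_trans (ge_sup some_root _)) (_ : B < c).
    by move=> _ [w /= chi_w <-]; apply: le_bigmax_seq => //; apply: rsP.
  by elim/big_ind: B => // x y x_lt y_lt; rewrite gt_max x_lt.
by rewrite /spectral_radius no_root sup0.
Qed.

End SpectralRadius.

Section Cubic.
Variables (R : comNzRingType) (c2 c1 c0 : R).

Definition cubic : {poly R} := 'X^3 - c2%:P * 'X^2 + c1%:P * 'X - c0%:P.

Lemma horner_cubic t : cubic.[t] = t ^+ 3 - c2 * t ^+ 2 + c1 * t - c0.
Proof. by rewrite /cubic !hornerE. Qed.

End Cubic.

Lemma map_cubic (R S : comNzRingType) (f : {rmorphism R -> S}) c2 c1 c0 :
  map_poly f (cubic c2 c1 c0) = cubic (f c2) (f c1) (f c0).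
Proof.
by rewrite /cubic !(rmorphB, rmorphD, rmorphXn, rmorphM) /= !map_polyC map_polyX.
Qed.

Lemma cubic_nonreal_root (R : rcfType) (c2 c1 c0 x y : R) : y != 0 ->
    root (map_poly (real_complex R) (cubic c2 c1 c0)) (x +i* y)%C ->
  exists r, [/\ root (cubic c2 c1 c0) r, r * (x ^+ 2 + y ^+ 2) = c0
              & c1 = x ^+ 2 + y ^+ 2 + 2 * x * r].
Proof.
move=> y_neq0; rewrite map_cubic /= => /rootP; rewrite horner_cubic.
set re := x ^+ 3 - 3 * x * y ^+ 2 - c2 * (x ^+ 2 - y ^+ 2) + c1 * x - c0.
set im := 3 * x ^+ 2 - y ^+ 2 - 2 * c2 * x + c1.
have -> : ((x +i* y) ^+ 3 - c2%:C * (x +i* y) ^+ 2 + c1%:C * (x +i* y) - c0%:C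
    = re +i* (y * im))%C.
  apply/eqP; rewrite !exprS !expr0 eq_complex /= /re /im.
  by apply/andP; split; apply/eqP; ring.
move=> [re0 /eqP]; rewrite mulf_eq0 (negbTE y_neq0) /= => /eqP im0.
exists (c2 - 2 * x); split.
- apply/rootP; rewrite horner_cubic; transitivity ((c2 - 3 * x) * im + re).
    by rewrite /re /im; ring.
  by rewrite re0 im0 mulr0 addr0.
- transitivity (c0 + re - x * im); first by rewrite /re /im; ring.
  by rewrite re0 im0 mulr0 addr0 subr0.
- transitivity (x ^+ 2 + y ^+ 2 + 2 * x * (c2 - 2 * x) + im).
    by rewrite /im; ring.
  by rewrite im0 addr0.
Qed.

Lemma monic_root_ge (R : rcfType) (p : {poly R}) c :
  p \is monic -> p.[c] <= 0 -> exists2 x, c <= x & root p x.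
Proof.
move=> /monicP p_monic pc_le0.
have lc_gt0 : 0 < lead_coef p by rewrite p_monic.
have [N pN_ge] := poly_pinfty_gt_lc lc_gt0.
set d := Num.max c N.
have pd_gt0 : 0 < p.[d].
  by apply: lt_le_trans (pN_ge d _); rewrite ?p_monic // le_max lexx orbT.
have c_le_d : c <= d by rewrite le_max lexx.
have [|x x_cd px] := poly_ivt (p := p) c_le_d; first by rewrite pc_le0 ltW.
by exists x => //; case/andP: x_cd.
Qed.

Section LyapunovEntries.
Variables (R : realFieldType) (a b : R).

Definition delta := 2 * a * (1 - b ^+ 2 - a).
Definition lyap11 := (1 + b) * (1 - 2 * b + 2 * b ^+ 2) + 2 * a * b.
Definition lyap12 := a * (1 - 2 * b ^+ 2 - 2 * a).

Hypotheses (a_gt0 : 0 < a) (b_ge0 : 0 <= b) (stable : a < 1 - b ^+ 2).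

Lemma delta_gt0 : 0 < delta.
Proof. by rewrite /delta !mulr_gt0 // subr_gt0. Qed.

Lemma lyap11_ge_half : 1 <= 2 * lyap11.
Proof.
have b_poly : 0 <= b * (1 - 2 * b + 2 * b ^+ 2).
  by rewrite mulr_ge0 // (_ : _ - _ + _ = (1 - b) ^+ 2 + b ^+ 2) ?addr_ge0 ?sqr_ge0 //; ring.
have := sqr_ge0 (1 - 2 * b); have := mulr_ge0 (ltW a_gt0) b_ge0.
rewrite /lyap11; lra.
Qed.

Lemma lyap_trace_gt0 : 0 < lyap11 + 2 * a.
Proof. by have := lyap11_ge_half; have := a_gt0; lra. Qed.

Lemma delta_le_lyap_trace : delta <= lyap11 + 2 * a.
Proof.
have := lyap11_ge_half; have := mulr_ge0 (ltW a_gt0) (sqr_ge0 b).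
have := mulr_ge0 (ltW a_gt0) (ltW a_gt0); rewrite /delta; lra.
Qed.

Lemma lyap_det_gt0 : lyap12 ^+ 2 < lyap11 * (2 * a).
Proof.
set c := 1 - 2 * b ^+ 2 - 2 * a.
have c_sq : c ^+ 2 <= 1.
  have : 0 <= (1 - c) * (1 + c).
    by rewrite mulr_ge0 // /c; have := sqr_ge0 b; move: a_gt0 stable; lra.
  by rewrite (_ : c ^+ 2 = 1 - (1 - c) * (1 + c)); [lra | ring].
have a_lt1 : a < 1 by have := sqr_ge0 b; move: stable; lra.
have : a ^+ 2 * c ^+ 2 <= a ^+ 2 by rewrite -[leRHS]mulr1 ler_wpM2l ?sqr_ge0.
have : a ^+ 2 < a by rewrite expr2 -[ltRHS]mulr1 ltr_pM2l.
have : a <= a * (2 * lyap11) by rewrite -[leLHS]mulr1 ler_wpM2l ?lyap11_ge_half // ltW.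
rewrite /lyap12 -/c exprMn; lra.
Qed.

End LyapunovEntries.

Section CharM.
Variables (R : realFieldType) (a b : R).

Definition charM : {poly R} :=
  cubic (1 + b + b ^+ 2 - 2 * a - 2 * a * b + 2 * a ^+ 2)
        (b + b ^+ 2 + b ^+ 3 - 2 * a * b - 2 * a * b ^+ 2) (b ^+ 3).

Lemma horner_charM t : charM.[t] =
  (t - b) * (t - 1) * (t - b ^+ 2) + 2 * a * t * (t * (1 + b - a) - b * (1 + b)).
Proof. by rewrite horner_cubic; ring. Qed.

Lemma horner_charM1 : charM.[1] = delta a b.
Proof. by rewrite horner_charM /delta; ring. Qed.

Lemma charM_gt0 t : 0 < a -> 0 <= b -> b < 1 -> a < 1 - b ^+ 2 -> 1 <= t ->
  0 < charM.[t].
Proof.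
move=> a_gt0 b_ge0 b_lt1 stable t_ge1; rewrite horner_charM.
have : 0 <= (t - b) * (t - 1) * (t - b ^+ 2).
  by rewrite !mulr_ge0 // subr_ge0; [lra | lra | nra].
have : 0 < 2 * a * t * (t * (1 + b - a) - b * (1 + b)).
  rewrite !mulr_gt0 //; try lra.
  have : 0 <= (t - 1) * (1 + b - a) by rewrite mulr_ge0 //; nra.
  nra.
lra.
Qed.

Lemma charM_lt0 t : 0 < a -> 0 <= b -> b < 1 -> t <= -1 -> charM.[t] < 0.
Proof.
move=> a_gt0 b_ge0 b_lt1 t_leN1; set u := - t.
have u_ge1 : 1 <= u by rewrite /u lerNr.
have sq : 2 * charM.[t] = - ((u + b) * (2 * u ^+ 2 + (1 - b) ^+ 2 * u - b - b ^+ 3))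
    - (2 * a * u - (1 + b) * (u + b)) ^+ 2.
  by rewrite horner_charM /u; ring.
have : 0 < (u + b) * (2 * u ^+ 2 + (1 - b) ^+ 2 * u - b - b ^+ 3).
  apply: mulr_gt0; first lra.
  have : b ^+ 3 <= 1 by rewrite exprn_ile1 // ltW.
  have : 0 <= (1 - b) ^+ 2 * u by rewrite mulr_ge0 ?sqr_ge0 //; lra.
  have : 1 <= u ^+ 2 by rewrite exprn_ege1.
  lra.
have := sqr_ge0 (2 * a * u - (1 + b) * (u + b)); lra.
Qed.

Lemma charM_lt0_small t : 0 < a -> 0 < b -> b < 1 -> 0 <= t <= b ^+ 2 ->
  charM.[t] < 0.
Proof.
move=> a_gt0 b_gt0 b_lt1 /andP[t_ge0 t_le].
have -> : charM.[t] =
    (t - b) * ((1 - t) * (b ^+ 2 - t) + 2 * a * (1 + b) * t) - 2 * a ^+ 2 * t ^+ 2.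
  by rewrite horner_charM; ring.
have b2_lt_b : b ^+ 2 < b by rewrite expr2 -[ltRHS]mul1r ltr_pM2r.
have : 0 < (1 - t) * (b ^+ 2 - t) + 2 * a * (1 + b) * t.
  have [t0|t_gt0] := eqVneq t 0.
    by rewrite t0 !(subr0, mulr0, addr0) mul1r exprn_gt0.
  rewrite ltr_pwDr ?mulr_ge0 //; try lra.
  by rewrite !mulr_gt0 // ?lt_def ?t_gt0 //; lra.
have := sqr_ge0 (a * t); rewrite exprMn; nra.
Qed.

End CharM.

Lemma charM_root_normc_lt1 (R : rcfType) (a b : R) z :
    0 < a -> 0 <= b -> b < 1 -> a < 1 - b ^+ 2 ->
  root (map_poly (real_complex R) (charM a b)) z -> Normc.normc z < 1.
Proof.
move=> a_gt0 b_ge0 b_lt1 stable; case: z => x y root_z.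
suff m_lt1 : x ^+ 2 + y ^+ 2 < 1 by rewrite /= -sqrtr1 ltr_sqrt ?ltr01.
have [y0|y_neq0] := eqVneq y 0.
  move: root_z; rewrite y0 expr0n addr0 -[(x +i* 0)%C]/(x%:C)%C fmorph_root.
  move=> /rootP px; have x_lt1 : x < 1.
    rewrite ltNge; apply/negP => /(charM_gt0 a_gt0 b_ge0 b_lt1 stable).
    by rewrite px ltxx.
  have x_gtN1 : -1 < x.
    by rewrite ltNge; apply/negP => /(charM_lt0 a_gt0 b_ge0 b_lt1); rewrite px ltxx.
  nra.
(* For |z| >= 1 the real root r = beta^3 / |z|^2 lies in [0, beta^2], where
   charM < 0; when beta = 0 the relation c1 = |z|^2 + 2 x r fails instead. *)
have [r [/rootP r_root rm c1E]] := cubic_nonreal_root y_neq0 root_z.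
move: rm c1E; set m := x ^+ 2 + y ^+ 2 => rm c1E.
have m_gt0 : 0 < m by rewrite ltr_wpDl ?sqr_ge0 // exprn_even_gt0.
rewrite ltNge; apply/negP => m_ge1.
move: b_ge0; rewrite le_eqVlt => /predU1P[b0|b_gt0].
  have /eqP : r * m = 0 by rewrite rm -b0 expr0n.
  rewrite mulf_eq0 (gt_eqF m_gt0) orbF => /eqP r0.
  by move: c1E; rewrite r0 -b0; lra.
have r_gt0 : 0 < r by rewrite -(pmulr_lgt0 _ m_gt0) rm exprn_gt0.
have r_le : r <= b ^+ 2.
  apply: le_trans (_ : r * m <= _); first exact: ler_peMr (ltW r_gt0) m_ge1.
  by rewrite rm exprS; apply: ler_piMl; [exact: sqr_ge0 | exact: ltW].
have := charM_lt0_small a_gt0 b_gt0 b_lt1 (_ : 0 <= r <= b ^+ 2).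
by rewrite r_root ltxx ltW // r_le => /(_ isT).
Qed.

Section Operator.
Variables (R : realType) (eta beta lambda : R).
Local Notation a := (eta * lambda).
Local Notation b := beta.
Local Notation M := (Mop eta beta lambda).

Lemma Mop_linear : linear M.
Proof.
move=> k X Y; rewrite /Mop mulmxDr mulmxDl -scalemxAr -scalemxAl !mxE.
by rewrite mulrDr scalerDl scalerDr scalerA mulrCA addrACA.
Qed.

Lemma psd_Qmx : psd (Qmx R).
Proof.
move=> v; rewrite qform2 /Qmx !mx2E.
by rewrite (_ : _ + _ = (v 0 0 - v 1 0) ^+ 2) ?sqr_ge0 //; ring.
Qed.

Lemma Mop_psd X : psd X -> psd (M X).
Proof.
move=> pX v; rewrite /Mop qformD qform_mulmx qformZ.
apply: addr_ge0 => //; apply: mulr_ge0 (psd_Qmx v).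
by rewrite -qform_delta mulr_ge0 // mulr_ge0 ?sqr_ge0.
Qed.

Lemma MopE X : M X = mx2
  ((1 - a) ^+ 2 * X 0 0 - (1 - a) * b * (X 0 1 + X 1 0) + b ^+ 2 * X 1 1 + a ^+ 2 * X 0 0)
  ((1 - a) * a * X 0 0 + (1 - a) * b * X 0 1 - b * a * X 1 0 - b ^+ 2 * X 1 1 - a ^+ 2 * X 0 0)
  ((1 - a) * a * X 0 0 - a * b * X 0 1 + b * (1 - a) * X 1 0 - b ^+ 2 * X 1 1 - a ^+ 2 * X 0 0)
  (a ^+ 2 * X 0 0 + a * b * (X 0 1 + X 1 0) + b ^+ 2 * X 1 1 + a ^+ 2 * X 0 0).
Proof.
apply/matrixP; apply: ord2P; apply: ord2P;
  by rewrite /Mop /Amx /Qmx !(mxE, sum_ord2) /=; ring.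
Qed.

Lemma char_poly_Mop : char_poly (sym_opmx M) = charM a b.
Proof.
rewrite /char_poly /char_poly_mx (expand_det_row _ 0) !big_ord_recl big_ord0 /cofactor.
rewrite !(expand_det_row _ 0) !big_ord_recl !big_ord0 /cofactor !det_mx11.
rewrite !mxE /= !MopE /sym_coord /sym_basis /= !mxE /bump /=.
rewrite ?(mulr0, mul0r, addr0, add0r, mulr1, mulr1n, mulr0n, sub0r, subr0).
rewrite ?(expr0, expr1, mulN1r) /charM /cubic.
by rewrite !(rmorphB, rmorphD, rmorphM, rmorphXn, rmorph1, rmorph0, rmorph_nat); ring.
Qed.

Lemma op_spectral_radius_Mop_lt1 : 0 < a -> 0 <= b -> b < 1 ->
  op_spectral_radius M < 1 <-> a < 1 - b ^+ 2.
Proof.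
move=> a_gt0 b_ge0 b_lt1; rewrite /op_spectral_radius.
have chiE : char_poly (map_mx (fun x : R => x%:C%C) (sym_opmx M)) =
    map_poly (real_complex R) (charM a b) by rewrite -map_char_poly char_poly_Mop.
split=> [rho_lt1|stable]; last first.
  apply: spectral_radius_lt ltr01 _ => z; rewrite chiE.
  exact: charM_root_normc_lt1.
rewrite ltNge; apply/negP => unstable.
have [||x x_ge1 root_x] := @monic_root_ge _ (charM a b) 1.
- by rewrite -char_poly_Mop char_poly_monic.
- rewrite horner_charM1 /delta; apply: mulr_ge0_le0; last by rewrite subr_le0.
  by rewrite mulr_ge0 // ltW.
have := @normc_le_spectral_radius _ _ (sym_opmx M) x%:C%C.
rewrite chiE fmorph_root root_x /= expr0n addr0 sqrtr_sqr ger0_norm.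
  by move=> /(_ isT); lra.
lra.
Qed.

Definition lyap := mx2 (lyap11 a b) (lyap12 a b) (lyap12 a b) (2 * a).

Lemma lyap_subr_Mop : lyap - M lyap = (delta a b)%:M.
Proof.
apply/matrixP; apply: ord2P; apply: ord2P;
  by rewrite MopE /lyap /delta /lyap11 /lyap12 !mxE /=; ring.
Qed.

Definition resolvent (Y : 'M[R]_2) : 'M[R]_2 :=
  let u := Y 0 0 in let w := Y 0 1 in let v := Y 1 1 in
  mx2 ((((1 - b) ^+ 2 * (1 + b) + 2 * a * b) * u
          + 2 * b * (b ^+ 2 - 1 + a) * w + b ^+ 2 * (1 + b) * v) / delta a b)
      ((a * (1 - b ^+ 2 - 2 * a) * u + 2 * a * (1 - b ^+ 2 - a) * w
          - a * b ^+ 2 * v) / delta a b)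
      ((a * (1 - b ^+ 2 - 2 * a) * u + 2 * a * (1 - b ^+ 2 - a) * w
          - a * b ^+ 2 * v) / delta a b)
      ((2 * a ^+ 2 * u + 2 * a * (1 - a) * v) / delta a b).

Lemma sym2_resolvent Y : sym2 (resolvent Y).
Proof. exact: sym2_mx2. Qed.

Lemma resolvent_Qmx_00 : resolvent (Qmx R) 0 0 = (1 + b) / delta a b.
Proof. by rewrite /resolvent /Qmx !mx2E; congr (_ / _); ring. Qed.

Section Stable.
Hypotheses (a_gt0 : 0 < a) (b_ge0 : 0 <= b) (stable : a < 1 - b ^+ 2).

Lemma delta_factors_neq0 : [&& 1 - b ^+ 2 - a != 0, lambda != 0 & eta != 0].
Proof.
have := lt0r_neq0 a_gt0; rewrite mulf_eq0 negb_or => /andP[-> ->].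
by rewrite gt_eqF // subr_gt0.
Qed.

Lemma resolventK X : sym2 X -> resolvent (X - M X) = X.
Proof.
move=> /sym2_10 X10; apply/matrixP; apply: ord2P; apply: ord2P;
  by rewrite /resolvent MopE !mxE /= ?X10 /delta; field; apply: delta_factors_neq0.
Qed.

Lemma subr_Mop_resolvent Y : sym2 Y -> resolvent Y - M (resolvent Y) = Y.
Proof.
move=> /sym2_10 Y10; apply/matrixP; apply: ord2P; apply: ord2P;
  by rewrite /resolvent MopE !mxE /= ?Y10 /delta; field; apply: delta_factors_neq0.
Qed.

Lemma lyap_ge_scalar : psd (lyap -
  ((lyap11 a b * (2 * a) - lyap12 a b ^+ 2) / (lyap11 a b + 2 * a))%:M).
Proof. exact: psd_mx2_sub_scalar (lyap_trace_gt0 _ _). Qed.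

Lemma Mop_lyap_le :
  psd ((1 - delta a b / (lyap11 a b + 2 * a)) *: lyap - M lyap).
Proof.
have tr_gt0 := lyap_trace_gt0 a_gt0 b_ge0.
have -> : (1 - delta a b / (lyap11 a b + 2 * a)) *: lyap - M lyap =
    (delta a b / (lyap11 a b + 2 * a)) *: ((lyap11 a b + 2 * a)%:M - lyap).
  rewrite -[M lyap](subKr lyap) lyap_subr_Mop scalerBl scale1r scalerBr.
  by rewrite scale_scalar_mx divfK ?gt_eqF // opprB addrC addrA subrK.
apply: psdZ; first by rewrite divr_ge0 ?ltW ?delta_gt0.
by apply: psd_scalar_sub_mx2; [rewrite mulr_gt0 | exact: ltW (lyap_det_gt0 _ _ _)].
Qed.

Lemma psd_of_psd_subr_Mop X : psd (X - M X) -> psd X.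
Proof.
have tr_gt0 := lyap_trace_gt0 a_gt0 b_ge0; have d_gt0 := delta_gt0 a_gt0 stable.
apply: (psd_of_psd_subr Mop_linear Mop_psd _ lyap_ge_scalar _ _ Mop_lyap_le).
- by rewrite divr_gt0 // subr_gt0 lyap_det_gt0.
- by rewrite subr_ge0 ler_pdivrMr // mul1r delta_le_lyap_trace.
- by rewrite ltrBlDr ltrDl divr_gt0.
Qed.

End Stable.
End Operator.

Theorem lemmaA3 (R : realType) (eta beta lambda : R)
  (heta : 0 < eta) (hb0 : 0 <= beta) (hb1 : beta < 1)
  (hl : 0 < eta * lambda) :
  (* (a) *)
  (op_spectral_radius (Mop eta beta lambda) < 1
     <-> eta * lambda < 1 - beta ^+ 2) /\
  (* (b) Id - M invertible on S^2, and (Id - M)^{-1}(S^2_+) ⊆ S^2_+ *)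
  (eta * lambda < 1 - beta ^+ 2 ->
     (forall Y : 'M[R]_2, sym2 Y ->
        exists! X : 'M[R]_2, sym2 X /\ X - Mop eta beta lambda X = Y) /\
     (forall X : 'M[R]_2, sym2 X ->
        psd2 (X - Mop eta beta lambda X) -> psd2 X)) /\
  (* (c) Y := (Id - M)^{-1} Q is PSD with Y_11 = gamma *)
  (eta * lambda < 1 - beta ^+ 2 ->
     forall Y : 'M[R]_2, sym2 Y -> Y - Mop eta beta lambda Y = Qmx R ->
       psd2 Y /\
       Y 0 0 = (1 + beta) /
               (2 * eta * lambda * (1 - beta ^+ 2 - eta * lambda))).
Proof.
split; first exact: op_spectral_radius_Mop_lt1.
split=> stable.
  split=> [Y symY | X symX psdXM].
    exists (resolvent eta beta lambda Y).
    split=> [|X [symX <-]]; last by rewrite resolventK.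
    by split; [exact: sym2_resolvent | exact: subr_Mop_resolvent].
  by split=> //; apply: (psd_of_psd_subr_Mop hl hb0 stable); case: psdXM.
move=> Y symY YQ.
have -> : Y = resolvent eta beta lambda (Qmx R) by rewrite -YQ resolventK.
split; last by rewrite resolvent_Qmx_00 /delta mulrA.
split; first exact: sym2_resolvent.
apply: (psd_of_psd_subr_Mop hl hb0 stable).
by rewrite subr_Mop_resolvent //; [exact: psd_Qmx | exact: sym2_mx2].
Qed.
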